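(* Let $E$ be a nonempty set and $\mathcal{E}$ a prepaving on $E$. Every maxitive measure $\nu$ on $\mathcal{E}$ is alternating (of infinite order), i.e. for all integers $n\geq 1$ and all $G,G_1,\dots,G_n\in\mathcal{E}$, \[ (-1)^{n+1}\,\Delta_{G_1}\cdots\Delta_{G_n}\nu(G)\geq 0 . \]
   Context: A prepaving on $E$ is a collection of subsets of $E$ containing $\emptyset$ and closed under finite unions. A maxitive measure on $\mathcal{E}$ is a map $\nu:\mathcal{E}\to[0,\infty]$ with $\nu(\emptyset)=0$ and $\nu(G\cup G')=\max(\nu(G),\nu(G'))$ for all $G,G'\in\mathcal{E}$. For a map $f:\mathcal{E}\to\mathbb{R}\cup\{\pm\infty\}$, define $\Delta_{G_1}f(G)=f(G\cup G_1)-f(G)$ and $\Delta_{G_1}\cdots\Delta_{G_n}f(G)$ by iterating this formula (applying $\Delta_{G_1}$ to the function $G\mapsto\Delta_{G_2}\cdots\Delta_{G_n}f(G)$), with the conventions $-\infty+\infty=\infty-\infty=0$. *)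

From mathcomp Require Import all_boot all_order all_algebra.
From mathcomp Require Import all_classical all_reals.
Set Implicit Arguments. Unset Strict Implicit. Unset Printing Implicit Defensive.
Import Order.TTheory GRing.Theory Num.Theory.
Local Open Scope classical_set_scope.
Local Open Scope ereal_scope.

Definition prepaving (E : Type) (P : set (set E)) : Prop :=
  P set0 /\ (forall G G', P G -> P G' -> P (G `|` G')).

Definition maxitive_measure (E : Type) (R : realType) (P : set (set E))
    (nu : set E -> \bar R) : Prop :=
  (forall G, P G -> 0 <= nu G) /\ nu set0 = 0 /\
  (forall G G', P G -> P G' -> nu (G `|` G') = maxe (nu G) (nu G')).

Definition conv_sub (R : realType) (x y : \bar R) : \bar R :=
  if ((x == +oo) && (y == +oo)) || ((x == -oo) && (y == -oo)) then 0 else x - y.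

(* Iterated difference: Delta [:: G1; ...; Gn] f G = Delta_{G1} ... Delta_{Gn} f (G). *)
Fixpoint Delta (E : Type) (R : realType) (Gs : seq (set E))
    (f : set E -> \bar R) (G : set E) : \bar R :=
  match Gs with
  | [::] => f G
  | G1 :: Gs' => conv_sub (Delta Gs' f (G `|` G1)) (Delta Gs' f G)
  end.

From mathcomp Require Import all_boot all_order all_algebra.
From mathcomp Require Import all_classical all_reals.
From mathcomp Require Import ring.
Import Order.TTheory GRing.Theory Num.Theory.
Local Open Scope classical_set_scope.
Local Open Scope ereal_scope.

(* For a maxitive nu, the iterated difference Delta_{G_1} ... Delta_{G_n} nu (G)
   only sees a = nu G and b_i = nu G_i: it is the n-th iterated difference of
   the identity of (\bar R, max), which by induction on n equals
   (-1)^(n+1) (min_i b_i - a)^+, or 0 once the convention +oo - +oo = 0 has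
   cancelled two infinite terms. *)

Section MaxDifferences.

Context {R : realType}.
Implicit Types (x y m a b : \bar R) (bs : seq (\bar R)).

Lemma conv_subxx x : conv_sub x x = 0.
Proof. by case: x => [x| |]; rewrite /conv_sub //= subee. Qed.

Lemma conv_sub_neq x y : x != y -> conv_sub x y = x - y.
Proof. by case: x y => [x| |] [y| |]; rewrite /conv_sub //= eqxx. Qed.

Lemma conv_subC x y : conv_sub x y = - conv_sub y x.
Proof.
have [->|xy] := eqVneq x y; first by rewrite conv_subxx oppe0.
rewrite conv_sub_neq // conv_sub_neq 1?eq_sym //.
by case: x y xy => [x| |] [y| |] //= _; rewrite opprB.
Qed.

Lemma conv_subNN x y : conv_sub (- x) (- y) = conv_sub y x.
Proof.
have [->|xy] := eqVneq x y; first by rewrite !conv_subxx.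
rewrite conv_sub_neq ?(inj_eq oppe_inj) // conv_sub_neq 1?eq_sym //.
by case: x y xy => [x| |] [y| |] //= _; rewrite -?EFinD -?EFinN ?opprK // addrC.
Qed.

Lemma conv_sub_sign k x y :
  conv_sub (((-1) ^+ k)%:E * x) (((-1) ^+ k)%:E * y) =
  ((-1) ^+ k.+1)%:E * conv_sub y x.
Proof.
rewrite exprS -signr_odd; case: odd; rewrite ?expr1 ?expr0 ?mulrN1 ?mulr1 ?opprK.
- by rewrite !mulN1e conv_subNN mul1e.
- by rewrite !mul1e mulN1e conv_subC.
Qed.

Definition excess m a := if a < m then m - a else 0.

Lemma excess_le m a : m <= a -> excess m a = 0.
Proof. by rewrite /excess ltNge => ->. Qed.

Lemma excess_gt m a : a < m -> excess m a = m - a.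
Proof. by rewrite /excess => ->. Qed.

Lemma excess_gt0 m a : a < m -> 0 < excess m a.
Proof. by move=> am; rewrite excess_gt // sube_gt0. Qed.

Lemma excess_ge0 m a : 0 <= excess m a.
Proof. by have [ma|/excess_gt0/ltW//] := leP m a; rewrite excess_le. Qed.

Lemma conv_sub_maxe_l a b : conv_sub (maxe a b) a = excess b a.
Proof.
have [ba|ab] := leP b a; first by rewrite conv_subxx excess_le.
by rewrite conv_sub_neq ?gt_eqF // excess_gt.
Qed.

Lemma conv_sub_excess_maxe m a b :
  conv_sub (excess m a) (excess m (maxe a b)) =
  if (m != +oo) || (b == +oo) then excess (mine b m) a else 0.
Proof.
have [ba|ab] := leP b a.
  by rewrite conv_subxx excess_le ?if_same // ge_min ba.
have [ma|am] := leP m a.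
  by rewrite !excess_le ?(le_trans ma (ltW ab)) // ?conv_subxx ?if_same // ge_min ma orbT.
have [mb|bm] := leP m b.
  rewrite [excess m b]excess_le // conv_sub_neq ?sube0; last by rewrite gt_eqF ?excess_gt0.
  by case: eqP mb => [->|//]; rewrite leye_eq => ->.
rewrite !excess_gt // ?(lt_trans ab bm) //.
case: m a b am ab bm => [m| |] [a| |] [b| |] //= _ _ _.
by rewrite /conv_sub /= -!EFinD; congr _%:E; ring.
Qed.

Fixpoint maxe_Delta bs a : \bar R :=
  match bs with
  | [::] => a
  | b :: bs' => conv_sub (maxe_Delta bs' (maxe a b)) (maxe_Delta bs' a)
  end.

Lemma maxe_Delta_sign b bs :
  exists c : bool, forall a, maxe_Delta (b :: bs) a =
    ((-1) ^+ (size bs).+2)%:E *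
    (if c then excess (\big[mine/+oo]_(x <- b :: bs) x) a else 0).
Proof.
elim: bs b => [|b' bs IH] b.
  by exists true => a; rewrite /= big_seq1 conv_sub_maxe_l sqrrN expr1n mul1e.
have [c Hc] := IH b'.
exists (c && ((\big[mine/+oo]_(x <- b' :: bs) x != +oo) || (b == +oo))) => a.
rewrite -[LHS]/(conv_sub (maxe_Delta (b' :: bs) (maxe a b)) (maxe_Delta (b' :: bs) a)).
rewrite !Hc conv_sub_sign; congr (_ * _).
case: (c) => /=; last by rewrite conv_subxx.
by rewrite conv_sub_excess_maxe (big_cons _ _ b).
Qed.

End MaxDifferences.

Section MaxitiveDelta.
Context {E : Type} {R : realType} {P : set (set E)} {nu : set E -> \bar R}.
Hypotheses (Pprep : prepaving P) (numax : maxitive_measure P nu).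

Lemma Delta_maxitive {Gs : seq (set E)} {G : set E} :
  P G -> (forall H, H \in Gs -> P H) ->
  Delta Gs nu G = maxe_Delta (map nu Gs) (nu G).
Proof.
have [_ PU] := Pprep; have [_ [_ nuU]] := numax.
elim: Gs G => [//|G1 Gs IH] G PG PGs /=.
have PG1 : P G1 by apply: PGs; rewrite mem_head.
have {}PGs H : H \in Gs -> P H by move=> HGs; apply: PGs; rewrite in_cons HGs orbT.
by rewrite !IH ?nuU //; apply: PU.
Qed.

End MaxitiveDelta.

Theorem proposition2p2 (E : Type) (R : realType) (P : set (set E))
    (nu : set E -> \bar R) :
  (exists e : E, True) ->
  prepaving P -> maxitive_measure P nu ->
  forall (n : nat) (Gs : seq (set E)) (G : set E),
    (1 <= n)%N -> size Gs = n -> P G -> (forall H, H \in Gs -> P H) ->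
    0 <= (((-1) ^+ n.+1)%R)%:E * Delta Gs nu G.
Proof.
move=> _ Pprep numax n Gs G n_gt0 sGs PG PGs; subst n.
rewrite (Delta_maxitive Pprep numax PG PGs).
case: Gs n_gt0 PGs => [//|G1 Gs] _ _.
have [c ->] := maxe_Delta_sign (nu G1) (map nu Gs).
rewrite size_map muleA -EFinM -exprD addnn -signr_odd odd_double mul1e.
by case: c; rewrite ?excess_ge0.
Qed.
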